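(* Let $\gamma > \sqrt{2}$ and let $I$ be a $\gamma$-stable instance of the Euclidean Steiner tree problem with optimal Steiner tree $\mathrm{OPT}$. Then every Steiner point that is a vertex of $\mathrm{OPT}$ has degree in $\mathrm{OPT}$ at most $\frac{-2}{2 - \gamma^2}$.
   Context: An instance of the Euclidean Steiner tree problem consists of a finite set $V \subset \mathbb{R}^d$, a set $T \subseteq V$ of terminals, and the complete graph on $V$ with edge weights $w_{uv} = \|u - v\|$. Points of $V \setminus T$ are Steiner points. A Steiner tree is a tree in this complete graph whose vertex set contains all of $T$; its weight is the sum of its edge weights. For $\gamma > 1$, the instance is $\gamma$-stable if it has a minimum-weight Steiner tree $\mathrm{OPT}$ such that for every $w' : V \times V \to \mathbb{R}_{\ge 0}$ with $w_{uv} \le w'_{uv} \le \gamma w_{uv}$ for all $u,v$, every minimum-weight Steiner tree with respect to $w'$ equals $\mathrm{OPT}$ (the $w'$ need not be Euclidean). *)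

From HB Require Import structures.
From mathcomp Require Import all_boot all_order all_algebra.
From mathcomp Require Import reals.
Set Implicit Arguments. Unset Strict Implicit. Unset Printing Implicit Defensive.
Import Order.TTheory GRing.Theory Num.Theory.
Local Open Scope ring_scope.

Section Steiner.
Variables (R : realType) (d : nat) (V : finType).

Definition edist (x y : 'rV[R]_d) : R :=
  Num.sqrt (\sum_(i < d) (x 0 i - y 0 i) ^+ 2).

Definition is_edge (e : {set V}) : bool := #|e| == 2%N.

(* Euclidean weight of an edge e = {u,v}: (1/2) * sum_{u,v in e} |u - v|,
   which equals |u - v| for a 2-element set. *)
Definition eucl_w (p : V -> 'rV[R]_d) (e : {set V}) : R :=
  (\sum_(u in e) \sum_(v in e) edist (p u) (p v)) / 2.

Definition adj (E : {set {set V}}) : rel V := fun x y => [set x; y] \in E.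

Definition connected_on (S : {set V}) (E : {set {set V}}) : Prop :=
  forall x y, x \in S -> y \in S -> connect (adj E) x y.

(* acyclic: no edge lies on a cycle, i.e. no edge {x,y} of E whose endpoints
   are still connected in E minus that edge *)
Definition acyclic (E : {set {set V}}) : Prop :=
  forall x y, x != y -> [set x; y] \in E ->
    ~~ connect (adj (E :\ [set x; y])) x y.

Definition is_tree (S : {set V}) (E : {set {set V}}) : Prop :=
  [/\ S != set0,
      (forall e, e \in E -> is_edge e /\ e \subset S),
      connected_on S E & acyclic E].

Definition steiner_tree (T S : {set V}) (E : {set {set V}}) : Prop :=
  is_tree S E /\ T \subset S.

Definition tree_weight (w : {set V} -> R) (E : {set {set V}}) : R :=
  \sum_(e in E) w e.

Definition min_steiner_tree (w : {set V} -> R) (T S : {set V})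
    (E : {set {set V}}) : Prop :=
  steiner_tree T S E /\
  forall S' E', steiner_tree T S' E' -> tree_weight w E <= tree_weight w E'.

Definition gamma_perturbation (p : V -> 'rV[R]_d) (gamma : R)
    (w' : {set V} -> R) : Prop :=
  forall u v, u != v ->
    edist (p u) (p v) <= w' [set u; v] <= gamma * edist (p u) (p v).

Definition gamma_stable_with (p : V -> 'rV[R]_d) (T : {set V}) (gamma : R)
    (S : {set V}) (E : {set {set V}}) : Prop :=
  min_steiner_tree (eucl_w p) T S E /\
  forall w', gamma_perturbation p gamma w' ->
    forall S' E', min_steiner_tree w' T S' E' -> S' = S /\ E' = E.

Definition degree (E : {set {set V}}) (v : V) : nat := #|[set e in E | v \in e]|.

End Steiner.

From HB Require Import structures.
From mathcomp Require Import all_boot all_order all_algebra.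
From mathcomp Require Import reals boolp.
From mathcomp Require Import ring lra.
Import Order.TTheory GRing.Theory Num.Theory.
Local Open Scope ring_scope.

(* Let s be a Steiner point of OPT with nonempty neighbourhood N. Multiplying
   the weights of the edges at s by gamma is a gamma-perturbation, so OPT stays
   the unique optimum. Replacing the star at s by the star centred at some
   m in N keeps the graph connected and changes the perturbed weight from
   rest + gamma * sum_u |u - s| to at most rest + sum_u |u - m|.
   With r_u = |u - s| and b_u the unit vector from s towards u, completing a
   square gives
     |u - m| / r_m <= g/4 (r_u/r_m + r_m/r_u) + r_u / (g r_m) - g/2 <b_u, b_m>,
   and sum_(u,m) <b_u, b_m> = |sum_u b_u|^2 >= 0. Taking g = sqrt 2, a
   (1/r_m)-weighted average over m of sum_u |u - m| is at most
   sqrt 2 * sum_u r_u < gamma * sum_u r_u, contradicting stability. Hence for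
   gamma > sqrt 2 Steiner points of OPT have degree 0, below the claimed bound. *)

Section EuclideanDistance.
Context {R : realType} {d : nat}.
Implicit Types c x y : 'rV[R]_d.

Lemma edist_ge0 x y : 0 <= edist x y.
Proof. exact: sqrtr_ge0. Qed.

Lemma edist_sqr x y : edist x y ^+ 2 = \sum_(i < d) (x 0 i - y 0 i) ^+ 2.
Proof. by rewrite sqr_sqrtr // sumr_ge0 // => i _; exact: sqr_ge0. Qed.

Lemma edistC x y : edist x y = edist y x.
Proof. by rewrite /edist; congr Num.sqrt; apply: eq_bigr => i _; rewrite -sqrrN opprB. Qed.

Lemma edistxx x : edist x x = 0.
Proof. by rewrite /edist big1 ?sqrtr0 // => i _; rewrite subrr expr0n. Qed.

Lemma edist_gt0 x y : x != y -> 0 < edist x y.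
Proof.
move=> neq_xy; rewrite lt_def edist_ge0 andbT; apply: contra neq_xy => /eqP d0.
have sum0 : \sum_(i < d) (x 0 i - y 0 i) ^+ 2 = 0 by rewrite -edist_sqr d0 expr0n.
apply/eqP/rowP => i; apply/eqP; rewrite -subr_eq0 -sqrf_eq0; apply/eqP.
exact: (psumr_eq0P (fun i _ => sqr_ge0 (x 0 i - y 0 i)) sum0).
Qed.

Lemma edist_sqr_apex c x y :
  edist x y ^+ 2 =
  edist c x ^+ 2 + edist c y ^+ 2 - 2 * \sum_(i < d) (x 0 i - c 0 i) * (y 0 i - c 0 i).
Proof.
rewrite !edist_sqr mulr_sumr -big_split -sumrB /=.
by apply: eq_bigr => i _; ring.
Qed.

Lemma gram_sum_ge0 (I : finType) (A : {pred I}) (a : I -> 'I_d -> R) :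
  0 <= \sum_(m in A) \sum_(u in A) \sum_(i < d) a u i * a m i.
Proof.
have -> : \sum_(m in A) \sum_(u in A) \sum_(i < d) a u i * a m i =
          \sum_(i < d) (\sum_(u in A) a u i) ^+ 2.
  rewrite exchange_big /=; under eq_bigr do rewrite exchange_big /=.
  rewrite exchange_big /=; apply: eq_bigr => i _.
  by rewrite expr2 mulr_suml; apply: eq_bigr => u _; rewrite mulr_sumr.
by apply: sumr_ge0 => i _; exact: sqr_ge0.
Qed.

End EuclideanDistance.

(* (y^2 + z^2 - x^2) / (2 y z) is the cosine of the angle between the sides y
   and z of a triangle whose third side is x. *)
Lemma ler_side_by_cosine {R : realFieldType} {g} x {y z : R} :
  0 < g -> 0 < y -> 0 < z ->
  x / z <= g / 4 * (y / z + z / y) + y / (g * z)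
           - g * (y ^+ 2 + z ^+ 2 - x ^+ 2) / (4 * (y * z)).
Proof.
move=> g0 y0 z0; rewrite -subr_ge0.
have -> : g / 4 * (y / z + z / y) + y / (g * z)
          - g * (y ^+ 2 + z ^+ 2 - x ^+ 2) / (4 * (y * z)) - x / z
          = (g * x / 2 - y) ^+ 2 / (g * y * z).
  by field; rewrite !gt_eqF.
by rewrite divr_ge0 ?sqr_ge0 // !mulr_ge0 // ltW.
Qed.

Lemma exists_le_weighted_sum (R : realDomainType) (I : finType) (A : {pred I})
    (w f h : I -> R) :
  (exists i, i \in A) -> (forall i, i \in A -> 0 < w i) ->
  \sum_(i in A) w i * f i <= \sum_(i in A) w i * h i ->
  exists2 i, i \in A & f i <= h i.
Proof.
move=> [i0 Ai0] w_gt0 le_sum; apply/exists_inP; apply: contraLR le_sum.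
move=> /exists_inPn lt_hf; rewrite -ltNge; apply: ltr_sum.
  by apply/hasP; exists i0; rewrite ?mem_index_enum.
by move=> i Ai; rewrite ltr_pM2l ?w_gt0 // ltNge lt_hf.
Qed.

Section ShortStar.
Context {R : realType} {d : nat} {V : finType}.
Context {q : V -> 'rV[R]_d} {c : 'rV[R]_d} {N : {set V}}.
Hypothesis q_neq_c : forall u, u \in N -> q u != c.

Let r u := edist c (q u).

Let r_gt0 {u} : u \in N -> 0 < r u.
Proof. by move=> Nu; rewrite edist_gt0 // eq_sym q_neq_c. Qed.

Lemma weighted_star_sum_le {g : R} : 0 < g ->
  \sum_(m in N) \sum_(u in N) edist (q u) (q m) / r m <=
  (g / 2 + g^-1) * \sum_(m in N) \sum_(u in N) r u / r m.
Proof.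
move=> g0.
pose b u i := (q u 0 i - c 0 i) / r u.
pose G m u := \sum_(i < d) b u i * b m i.
have pair_le m u : m \in N -> u \in N ->
    edist (q u) (q m) / r m <=
    g / 4 * (r u / r m + r m / r u) + g^-1 * (r u / r m) - g / 2 * G m u.
  move=> Nm Nu.
  have := ler_side_by_cosine (edist (q u) (q m)) g0 (r_gt0 Nu) (r_gt0 Nm).
  rewrite [edist (q u) (q m) ^+ 2](edist_sqr_apex c) -/(r u) -/(r m) /G.
  have -> : \sum_(i < d) b u i * b m i =
            (\sum_(i < d) (q u 0 i - c 0 i) * (q m 0 i - c 0 i)) / (r u * r m).
    by rewrite mulr_suml; apply: eq_bigr => i _; rewrite /b invfM; ring.
  congr (_ <= _ - _); field; rewrite !gt_eqF ?r_gt0 //.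
pose Q := \sum_(m in N) \sum_(u in N) r u / r m.
have swapQ : \sum_(m in N) \sum_(u in N) r m / r u = Q by rewrite exchange_big.
apply: le_trans (ler_sum _ (fun m Nm => ler_sum _ (fun u Nu => pair_le m u Nm Nu))) _.
under eq_bigr => m _ do rewrite sumrB big_split /= -!mulr_sumr big_split /=.
rewrite sumrB big_split /= -!mulr_sumr big_split /= swapQ -/Q.
have : 0 <= g / 2 * \sum_(m in N) \sum_(u in N) G m u.
  by rewrite mulr_ge0 ?gram_sum_ge0 // divr_ge0 // ltW.
lra.
Qed.

Lemma exists_short_star (g : R) : N != set0 -> Num.sqrt 2 < g ->
  exists2 m, m \in N &
    \sum_(u in N) edist (q u) (q m) < g * \sum_(u in N) edist c (q u).
Proof.
case/set0Pn=> u0 Nu0 sqrt2_lt_g.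
set s2 := Num.sqrt (2 : R).
have s2_gt0 : 0 < s2 by rewrite sqrtr_gt0.
(* g = sqrt 2 minimises g / 2 + g^-1. *)
have s2_mid : s2 / 2 + s2^-1 = s2.
  have s2_sqr : s2 ^+ 2 = 2 by rewrite sqr_sqrtr.
  have s2_neq0 : s2 != 0 by rewrite gt_eqF.
  apply: (mulfI s2_neq0); rewrite mulrDr mulfV // mulrA -expr2 s2_sqr.
  lra.
have sum_r_gt0 : 0 < \sum_(u in N) r u.
  have : \sum_(u in N) 0 < \sum_(u in N) r u.
    apply: ltr_sum => [|u Nu]; last exact: r_gt0.
    by apply/hasP; exists u0; rewrite ?mem_index_enum.
  by rewrite big1_eq.
have := weighted_star_sum_le s2_gt0; rewrite s2_mid => weighted_le.
have [m Nm le_s2] : exists2 m, m \in N &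
    \sum_(u in N) edist (q u) (q m) <= s2 * \sum_(u in N) r u.
  apply: (@exists_le_weighted_sum _ _ _ (fun m => (r m)^-1)).
  - by exists u0.
  - by move=> m Nm; rewrite invr_gt0 r_gt0.
  have -> : \sum_(m in N) (r m)^-1 * (s2 * \sum_(u in N) r u) =
            s2 * \sum_(m in N) \sum_(u in N) r u / r m.
    by rewrite [RHS]mulr_sumr; apply: eq_bigr => m _; rewrite -mulr_suml; ring.
  rewrite (eq_bigr (fun m => \sum_(u in N) edist (q u) (q m) / r m)) //.
  by move=> m _; rewrite mulrC mulr_suml.
by exists m => //; apply: le_lt_trans le_s2 _; rewrite ltr_pM2r.
Qed.

End ShortStar.

Lemma ler_sum_setU {R : numDomainType} {I : finType} (A B : {set I}) {F : I -> R} :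
  (forall i, 0 <= F i) ->
  \sum_(i in A :|: B) F i <= \sum_(i in A) F i + \sum_(i in B) F i.
Proof.
move=> F_ge0; rewrite (big_setID A) /= setUK setDUl setDv set0U.
rewrite lerD2l [X in _ <= X](big_setID A) /= lerDr.
exact: sumr_ge0.
Qed.

Section Graphs.
Context {V : finType}.
Implicit Types (T S : {set V}) (E : {set {set V}}).

Lemma adj_sym E : symmetric (adj E).
Proof. by move=> x y; rewrite /adj setUC. Qed.

Lemma eq_set2 {a b x y : V} :
  [set a; b] = [set x; y] -> (a = x /\ b = y) \/ (a = y /\ b = x).
Proof.
move=> eq_ab_xy.
have a_xy : a \in [set x; y] by rewrite -eq_ab_xy set21.
have b_xy : b \in [set x; y] by rewrite -eq_ab_xy set22.
case/set2P: a_xy b_xy eq_ab_xy => -> /set2P[] -> eq_xy; try by [left | right].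
- have : y \in [set x; x] by rewrite eq_xy set22.
  by rewrite setUid inE => /eqP ->; left.
- have : x \in [set y; y] by rewrite eq_xy set21.
  by rewrite setUid inE => /eqP ->; left.
Qed.

Lemma connect_setD1_edge {E x y} :
  connect (adj (E :\ [set x; y])) x y ->
  subrel (connect (adj E)) (connect (adj (E :\ [set x; y]))).
Proof.
move=> cxy; apply: connect_sub => a b Eab.
have [/eq_set2[[-> ->] | [-> ->]] | neq_ab] := eqVneq [set a; b] [set x; y].
- exact: cxy.
- by rewrite (sym_connect_sym (adj_sym _)).
- by apply: connect1; rewrite /adj in_setD1 neq_ab.
Qed.

Definition connected_steiner T S E : Prop :=
  [/\ S != set0, (forall e, e \in E -> is_edge e /\ e \subset S),
      connected_on S E & T \subset S].

Lemma steiner_tree_connected {T S E} : steiner_tree T S E -> connected_steiner T S E.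
Proof. by case=> -[]. Qed.

Section MinimumWeight.
Context {R : realType} {w : {set V} -> R}.
Hypothesis w_gt0 : forall x y : V, x != y -> 0 < w [set x; y].

Lemma min_connected_steiner_acyclic {T S E} :
  connected_steiner T S E ->
  (forall S1 E1, connected_steiner T S1 E1 -> tree_weight w E <= tree_weight w E1) ->
  acyclic E.
Proof.
move=> [S_neq0 Eedge Econn TS] Emin x y neq_xy Exy; apply/negP => cxy.
have : tree_weight w E <= tree_weight w (E :\ [set x; y]).
  apply: (Emin S); split => //.
  - by move=> e /setD1P[_ /Eedge].
  - by move=> a b Sa Sb; apply: connect_setD1_edge cxy _ _ (Econn a b Sa Sb).
rewrite /tree_weight (big_setD1 _ Exy) /=.
by have := w_gt0 x y neq_xy; lra.
Qed.

Lemma exists_min_steiner_tree {T S E} : connected_steiner T S E ->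
  exists S0 E0, min_steiner_tree w T S0 E0 /\
    forall S1 E1, connected_steiner T S1 E1 -> tree_weight w E0 <= tree_weight w E1.
Proof.
move=> cST.
pose P (x : {set V} * {set {set V}}) := `[< connected_steiner T x.1 x.2 >].
have PSE : P (S, E) by apply/asboolP.
case: (arg_minP (fun x => tree_weight w x.2) PSE) => -[S0 E0] /asboolP c0 min0.
have {}min0 S1 E1 : connected_steiner T S1 E1 -> tree_weight w E0 <= tree_weight w E1.
  by move=> c1; apply: (min0 (S1, E1)); apply/asboolP.
exists S0, E0; split => //; split.
  have [S0_neq0 E0edge E0conn TS0] := c0.
  by split => //; split => //; exact: min_connected_steiner_acyclic c0 min0.
by move=> S1 E1 /steiner_tree_connected /min0.
Qed.
End MinimumWeight.

Definition nbhd E s := [set u | [set s; u] \in E].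

Definition move_star E s m :=
  [set e in E | s \notin e] :|: [set [set u; m] | u in nbhd E s :\ m].

Section Star.
Context {E : {set {set V}}} {s : V}.
Hypothesis E_edge : forall e, e \in E -> is_edge e.

Lemma nbhd_neq u : u \in nbhd E s -> u != s.
Proof.
rewrite inE; apply: contraL => /eqP ->; rewrite setUid.
by apply/negP => /E_edge; rewrite /is_edge cards1.
Qed.

Lemma edges_at_nbhd : [set e in E | s \in e] = [set [set s; u] | u in nbhd E s].
Proof.
apply/setP => e; rewrite inE; apply/andP/imsetP => [[Ee se] | [u Nu ->]].
  have /cards2P[x [y [_ exy]]] := E_edge _ Ee.
  move: se Ee; rewrite exy => /set2P[<- | <-] Ee; first by exists y; rewrite ?inE.
  by exists x; [rewrite inE setUC | exact: setUC].
by rewrite inE in Nu; split; last exact: set21.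
Qed.

Lemma set2_injr : injective (fun u : V => [set s; u]).
Proof. by move=> u u' /eq_set2[[_ ->] | [-> ->]]. Qed.

Lemma degree_nbhd : degree E s = #|nbhd E s|.
Proof. by rewrite /degree edges_at_nbhd card_imset //; exact: set2_injr. Qed.

Lemma tree_weight_split_star (R : realType) (w : {set V} -> R) :
  tree_weight w E = \sum_(e in E | s \notin e) w e + \sum_(u in nbhd E s) w [set s; u].
Proof.
rewrite /tree_weight (bigID (fun e : {set V} => s \notin e) (fun e => e \in E)) /=.
congr (_ + _).
have -> : \sum_(e in E | ~~ (s \notin e)) w e = \sum_(e in [set e in E | s \in e]) w e.
  by apply: eq_bigl => e; rewrite inE negbK.
by rewrite edges_at_nbhd big_imset //; move=> u u' _ _; exact: set2_injr.
Qed.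

End Star.

Lemma tree_weight_move_star_le {R : realType} {w : {set V} -> R} E s m :
  (forall e, 0 <= w e) ->
  tree_weight w (move_star E s m) <=
  \sum_(e in E | s \notin e) w e + \sum_(u in nbhd E s :\ m) w [set u; m].
Proof.
move=> w_ge0; apply: le_trans (ler_sum_setU _ _ w_ge0) _.
rewrite big_imset /=; last first.
  move=> u u' /setD1P[neq_um _] _ /eq_set2[[-> _] // | [eq_um _]].
  by rewrite eq_um eqxx in neq_um.
by rewrite lerD2r le_eqVlt; apply/orP; left; apply/eqP/eq_bigl => e; rewrite inE.
Qed.

End Graphs.

Section MoveStar.
Context {V : finType} {T S : {set V}} {E : {set {set V}}} {s m : V}.
Hypotheses (cSE : connected_steiner T S E) (Nm : m \in nbhd E s).

Lemma move_star_connect_center z :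
  z \in S -> z != s -> connect (adj (move_star E s m)) z m.
Proof.
have [_ Eedge Econn _] := cSE.
have Ss : s \in S by move: Nm; rewrite inE => /Eedge[_ /subsetP]; apply; exact: set21.
move=> Sz neq_zs; have /connectP[pth zs_path last_s] := Econn z s Sz Ss.
elim: pth z zs_path last_s Sz neq_zs => [|z1 pth IH] z /=.
  by move=> _ ->; rewrite eqxx.
case/andP=> Ezz1 z1s_path last_s Sz neq_zs.
have [eq_z1s | neq_z1s] := eqVneq z1 s.
  have Nz : z \in nbhd E s by rewrite inE setUC -eq_z1s.
  have [-> | neq_zm] := eqVneq z m; first exact: connect0.
  apply: connect1; rewrite /adj inE; apply/orP; right.
  by apply: imset_f; rewrite in_setD1 neq_zm.
have Sz1 : z1 \in S by have [_ /subsetP] := Eedge _ Ezz1; apply; exact: set22.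
apply: connect_trans (IH z1 z1s_path last_s Sz1 neq_z1s).
apply: connect1; rewrite /adj inE; apply/orP; left.
rewrite inE; apply/andP; split; first exact: Ezz1.
by rewrite !inE negb_or !(eq_sym s) neq_zs neq_z1s.
Qed.

Lemma move_star_connected_steiner :
  s \notin T -> connected_steiner T (S :\ s) (move_star E s m).
Proof.
move=> sT; have [_ Eedge _ TS] := cSE.
have S_nbhd u : u \in nbhd E s -> u \in S.
  by rewrite inE => /Eedge[_ /subsetP]; apply; exact: set22.
have neq_nbhd_s u : u \in nbhd E s -> u != s.
  by apply: nbhd_neq => e /Eedge[].
split.
- by apply/set0Pn; exists m; rewrite in_setD1 neq_nbhd_s ?S_nbhd.
- move=> e /setUP[/setIdP[/Eedge[edge_e eS] se] | /imsetP[u /setD1P[neq_um Nu] ->]].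
    by rewrite subsetD1 eS se.
  split; first by rewrite /is_edge cards2 neq_um.
  by apply/subsetP => z /set2P[] ->; rewrite in_setD1 neq_nbhd_s ?S_nbhd.
- move=> x y /setD1P[neq_xs Sx] /setD1P[neq_ys Sy].
  apply: connect_trans (move_star_connect_center _ Sx neq_xs) _.
  by rewrite (sym_connect_sym (adj_sym _)); exact: move_star_connect_center.
- by rewrite subsetD1 TS sT.
Qed.

End MoveStar.

Section StarPerturbation.
Context {R : realType} {d : nat} {V : finType} (p : V -> 'rV[R]_d).

Lemma eucl_w_set2 u v : u != v -> eucl_w p [set u; v] = edist (p u) (p v).
Proof.
move=> neq_uv; have uv : u \notin [set v] by rewrite inE.
rewrite /eucl_w big_setU1 //= big_set1 !big_setU1 //= !big_set1.
by rewrite !edistxx [edist (p v) _]edistC; lra.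
Qed.

Lemma eucl_w_ge0 e : 0 <= eucl_w p e.
Proof.
by rewrite divr_ge0 // sumr_ge0 // => u _; apply: sumr_ge0 => v _; exact: edist_ge0.
Qed.

Lemma perturbation_gt0 {gamma : R} {w' : {set V} -> R} :
  injective p -> gamma_perturbation p gamma w' ->
  forall x y, x != y -> 0 < w' [set x; y].
Proof.
move=> p_inj pert x y neq_xy; have /andP[le_w' _] := pert x y neq_xy.
by apply: lt_le_trans le_w'; rewrite edist_gt0 // (inj_eq p_inj).
Qed.

Variables (gamma : R) (E : {set {set V}}) (s : V).
Hypothesis gamma_ge1 : 1 <= gamma.

Definition star_perturbation (e : {set V}) : R :=
  (if (e \in E) && (s \in e) then gamma else 1) * eucl_w p e.

Lemma star_perturbation_ge0 e : 0 <= star_perturbation e.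
Proof.
rewrite mulr_ge0 ?eucl_w_ge0 //; case: ifP => _ //.
exact: le_trans ler01 gamma_ge1.
Qed.

Lemma star_perturbationP : gamma_perturbation p gamma star_perturbation.
Proof.
move=> u v neq_uv; rewrite /star_perturbation eucl_w_set2 //.
have d_ge0 := edist_ge0 (p u) (p v).
by case: ifP => _; rewrite ?mul1r lexx ler_peMl.
Qed.

Hypothesis E_edge : forall e, e \in E -> is_edge e.

Lemma sum_star_perturbation_star :
  \sum_(u in nbhd E s) star_perturbation [set s; u] =
  gamma * \sum_(u in nbhd E s) edist (p s) (p u).
Proof.
rewrite mulr_sumr; apply: eq_bigr => u Nu.
have E_su : [set s; u] \in E by rewrite inE in Nu.
rewrite /star_perturbation E_su set21.
by rewrite eucl_w_set2 // eq_sym (nbhd_neq E_edge _ Nu).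
Qed.

Lemma sum_star_perturbation_move_star m : m \in nbhd E s ->
  \sum_(u in nbhd E s :\ m) star_perturbation [set u; m] =
  \sum_(u in nbhd E s) edist (p u) (p m).
Proof.
move=> Nm; rewrite [RHS](big_setD1 _ Nm) /= edistxx add0r.
apply: eq_bigr => u /setD1P[neq_um Nu].
have s_out : s \notin [set u; m].
  by rewrite !inE negb_or !(eq_sym s) (nbhd_neq E_edge _ Nu) (nbhd_neq E_edge _ Nm).
by rewrite /star_perturbation (negbTE s_out) andbF mul1r eucl_w_set2.
Qed.

End StarPerturbation.

Lemma stable_tree_min_connected {R : realType} {d : nat} {V : finType}
    {p : V -> 'rV[R]_d} {T gamma S E w'} :
  injective p -> gamma_stable_with p T gamma S E -> gamma_perturbation p gamma w' ->
  forall S1 E1, connected_steiner T S1 E1 -> tree_weight w' E <= tree_weight w' E1.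
Proof.
move=> p_inj [[SE_tree _] stable] pert.
have [S0 [E0 [min0 le0]]] := exists_min_steiner_tree (perturbation_gt0 _ p_inj pert)
  (steiner_tree_connected SE_tree).
by have [_ <-] := stable w' pert S0 E0 min0.
Qed.

Theorem mainTheorem12 (R : realType) (d : nat) (V : finType)
    (p : V -> 'rV[R]_d) (T : {set V}) (gamma : R)
    (S : {set V}) (E : {set {set V}}) :
  injective p ->
  1 < gamma ->
  Num.sqrt 2 < gamma ->
  gamma_stable_with p T gamma S E ->
  forall v, v \in S -> v \notin T ->
    (degree E v)%:R <= -2 / (2 - gamma ^+ 2).
Proof.
move=> p_inj gamma_gt1 sqrt2_lt_gamma stable s Ss sT.
have [[SE_tree _] _] := stable.
have cSE := steiner_tree_connected SE_tree.
have E_edge e : e \in E -> is_edge e by case: cSE => _ Eedge _ _ /Eedge[].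
rewrite degree_nbhd //.
have [-> | N_neq0] := eqVneq (nbhd E s) set0.
  have : 2 < gamma ^+ 2.
    by have := sqrtr_ge0 (2 : R); have := sqr_sqrtr (ler0n R 2); nra.
  by rewrite cards0 mulNr -mulrN -invrN opprB => ?; rewrite divr_ge0 // subr_ge0 ltW.
exfalso.
have p_nbhd u : u \in nbhd E s -> p u != p s.
  by move=> Nu; rewrite (inj_eq p_inj) (nbhd_neq E_edge _ Nu).
have [m Nm short_star] := exists_short_star p_nbhd _ N_neq0 sqrt2_lt_gamma.
have gamma_ge1 := ltW gamma_gt1.
have := stable_tree_min_connected p_inj stable (star_perturbationP p gamma E s gamma_ge1)
  _ _ (move_star_connected_steiner cSE Nm sT).
rewrite (tree_weight_split_star (s := s) E_edge).
rewrite (sum_star_perturbation_star p gamma E s E_edge).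
have := tree_weight_move_star_le E s m (star_perturbation_ge0 p gamma E s gamma_ge1).
rewrite (sum_star_perturbation_move_star p gamma E s E_edge m Nm).
lra.
Qed.
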